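(* Let $m\ge1$ be an integer and $\mathcal S'=\{x_0,x_1,x_2,\ldots,x_m\}$, with corresponding restricted right-arm rotation distance $d_{RRA}^{\mathcal S'}$ (rotations allowed at all right-arm nodes at levels $0,1,\ldots,m$). Then for every integer $n>m+4$ there exist finite rooted binary trees $T_1,T_2$, each with $n$ nodes, such that $d_{RRA}^{\mathcal S'}(T_1,T_2)$ is defined and $d_{RRA}^{\mathcal S'}(T_1,T_2)\ge 4n-4m-4$.
   Context: Trees: finite rooted binary trees, each internal vertex (node) having a left and a right child. The right arm consists of the root and all nodes reachable from the root by a path of right edges; the level of a node is its distance from the root. Right rotation at a node $N$ whose left child $M$ is a node (with $A,B$ the subtrees of $M$, $C$ the right subtree of $N$) replaces the subtree at $N$ by one whose root has left subtree $A$ and right child a node with left subtree $B$ and right subtree $C$; left rotation at $N$ is the inverse. Rotations preserve the number of nodes. $d_{RRA}^{\mathcal S'}(T_1,T_2)$ is the minimal number of rotations, each at a right-arm node at one of the levels $0,1,\ldots,m$, required to transform $T_1$ into $T_2$; it is defined when such a sequence exists. *)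

From Stdlib Require Import Arith.

(* Finite rooted binary trees: a tree is either empty (Leaf) or a node
   with a left and a right subtree.  Nodes = internal vertices. *)
Inductive tree : Type :=
| Leaf : tree
| Node : tree -> tree -> tree.

Fixpoint nodes (t : tree) : nat :=
  match t with
  | Leaf => 0
  | Node l r => S (nodes l + nodes r)
  end.

Definition rot_right (t : tree) : option tree :=
  match t with
  | Node (Node a b) c => Some (Node a (Node b c))
  | _ => None
  end.

Definition rot_left (t : tree) : option tree :=
  match t with
  | Node a (Node b c) => Some (Node (Node a b) c)
  | _ => None
  end.

Definition root_rotation (t t' : tree) : Prop :=
  rot_right t = Some t' \/ rot_left t = Some t'.

(* rarm_rotation k t t' : t' is obtained from t by a rotation at the
   right-arm node at level k (the node reached from the root by k right
   edges). *)
Fixpoint rarm_rotation (k : nat) (t t' : tree) : Prop :=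
  match k with
  | 0 => root_rotation t t'
  | S k' =>
      match t, t' with
      | Node l r, Node l' r' => l' = l /\ rarm_rotation k' r r'
      | _, _ => False
      end
  end.

(* One allowed move for S' = {x_0, ..., x_m}: a rotation at a right-arm
   node at one of the levels 0, 1, ..., m. *)
Definition rra_step (m : nat) (t t' : tree) : Prop :=
  exists k, k <= m /\ rarm_rotation k t t'.

Inductive rra_path (m : nat) : nat -> tree -> tree -> Prop :=
| rra_refl : forall t, rra_path m 0 t t
| rra_cons : forall j t u v,
    rra_step m t u -> rra_path m j u v -> rra_path m (S j) t v.

Definition drra_defined (m : nat) (t1 t2 : tree) : Prop :=
  exists j, rra_path m j t1 t2.

(* d_RRA^{S'}(T1,T2) >= b : every admissible sequence has length >= b
   (i.e. the minimal length is at least b). *)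
Definition drra_ge (m : nat) (t1 t2 : tree) (b : nat) : Prop :=
  forall j, rra_path m j t1 t2 -> b <= j.

From Stdlib Require Import Lia ZArith List Bool.

(* Every admissible rotation changes the potential [Phi m] by at most one.
   A rotation at level k <= m turns [spine ls (Node (Node A B) C)] into
   [spine ls (Node A (Node B C))] with [length ls = k], so a case analysis on
   whether the right arm of C has 0, 1 or more nodes suffices.  For T1, a root whose left subtree is a right vine of n - 1 nodes,
   and T2, a root whose left child has a right vine of n - 2 nodes as left
   subtree, Phi differs by 4n - 2m - 6 >= 4n - 4m - 4.  T1 and T2 are connected
   by rotations at levels 0 and 1 that move the vine node by node into a left
   vine and back. *)

Fixpoint right_vine (k : nat) : tree :=
  match k with 0 => Leaf | S k => Node Leaf (right_vine k) end.

Fixpoint left_vine (k : nat) : tree :=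
  match k with 0 => Leaf | S k => Node (left_vine k) Leaf end.

Fixpoint arm (t : tree) : nat :=
  match t with Leaf => 0 | Node _ r => S (arm r) end.

Fixpoint last_left (t : tree) : tree :=
  match t with
  | Leaf => Leaf
  | Node l Leaf => l
  | Node _ r => last_left r
  end.

Fixpoint penult_left (t : tree) : tree :=
  match t with
  | Node l (Node _ Leaf) => l
  | Node _ r => penult_left r
  | Leaf => Leaf
  end.

Fixpoint is_right_vine (t : tree) : bool :=
  match t with
  | Leaf => true
  | Node Leaf r => is_right_vine r
  | Node _ _ => false
  end.

Fixpoint vine_tail (t : tree) : nat :=
  match t with
  | Leaf => 0
  | Node _ r => (if is_right_vine t then 1 else 0) + vine_tail r
  end.

Fixpoint spine (ls : list tree) (u : tree) : tree :=
  match ls with nil => u | l :: ls => Node l (spine ls u) end.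

Lemma arm_spine ls u : arm (spine ls u) = length ls + arm u.
Proof. induction ls; simpl; auto. Qed.

Lemma last_left_spine ls x y : last_left (spine ls (Node x y)) = last_left (Node x y).
Proof.
  induction ls as [|l ls IH]; [reflexivity|].
  simpl spine. rewrite <- IH. destruct ls; reflexivity.
Qed.

Lemma penult_left_spine ls u : 2 <= arm u -> penult_left (spine ls u) = penult_left u.
Proof.
  intros Hu. induction ls as [|l ls IH]; [reflexivity|].
  simpl spine. rewrite <- IH.
  destruct (spine ls u) as [|a [|b c]] eqn:E; try reflexivity;
    apply (f_equal arm) in E; rewrite arm_spine in E; simpl in E; lia.
Qed.

Lemma rarm_rotation_spine k t t' : rarm_rotation k t t' ->
  exists ls A B C, length ls = k /\
    (t = spine ls (Node (Node A B) C) /\ t' = spine ls (Node A (Node B C)) \/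
     t' = spine ls (Node (Node A B) C) /\ t = spine ls (Node A (Node B C))).
Proof.
  revert t t'; induction k as [|k IH]; intros t t' H.
  - destruct H as [H|H].
    + destruct t as [|[|a b] c]; try discriminate. injection H as <-.
      exists nil, a, b, c. auto.
    + destruct t as [|a [|b c]]; try discriminate. injection H as <-.
      exists nil, a, b, c. auto.
  - destruct t as [|l r], t' as [|l' r']; try contradiction. destruct H as [-> H].
    destruct (IH _ _ H) as (ls & A & B & C & Hk & Hrot).
    exists (l :: ls), A, B, C. simpl. split; [congruence|].
    destruct Hrot as [[-> ->]|[-> ->]]; auto.
Qed.

(* [potential m a L P] is [Phi m t] for a tree t whose right arm has a nodes,
   the last with left subtree L and the penultimate with left subtree P.  The
   last summand measures how far the end of the right arm of L lies below
   level m + 1. *)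
Definition potential (m a : nat) (L P : tree) : Z :=
  (match L with
  | Leaf => - Z.of_nat a - 2 * Z.of_nat (vine_tail P)
  | Node _ _ =>
      - Z.of_nat a - 2 * Z.of_nat (vine_tail (last_left L))
      - (if (a =? 1)%nat && (arm L =? 1)%nat && is_right_vine (last_left L) then 2 else 0)
      + 2 * Z.max 0 (Z.of_nat (a + arm L) - 2 - Z.of_nat m)
  end)%Z.

Lemma potential_node m a L P : L <> Leaf ->
  potential m a L P =
   (- Z.of_nat a - 2 * Z.of_nat (vine_tail (last_left L))
    - (if (a =? 1)%nat && (arm L =? 1)%nat && is_right_vine (last_left L) then 2 else 0)
    + 2 * Z.max 0 (Z.of_nat (a + arm L) - 2 - Z.of_nat m))%Z.
Proof. destruct L; [contradiction|reflexivity]. Qed.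

Definition Phi (m : nat) (t : tree) : Z :=
  potential m (arm t) (last_left t) (penult_left t).

Lemma Phi_spine m ls u : 2 <= arm u ->
  Phi m (spine ls u) = potential m (length ls + arm u) (last_left u) (penult_left u).
Proof.
  intros Hu. destruct u as [|x y]; [simpl in Hu; lia|].
  unfold Phi. now rewrite arm_spine, last_left_spine, penult_left_spine.
Qed.

Lemma Phi_spine_last m ls x y :
  Phi m (spine ls (Node (Node x y) Leaf)) = potential m (S (length ls)) (Node x y) Leaf.
Proof.
  unfold Phi. rewrite arm_spine, last_left_spine, Nat.add_1_r. reflexivity.
Qed.

Ltac potential_arith :=
  unfold potential; simpl last_left; simpl arm; simpl vine_tail;
  repeat match goal with |- context [if ?b then _ else _] => destruct b eqn:? end;
  repeat match goal with
    | H : _ && _ = true |- _ => apply andb_true_iff in H as [? ?]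
    | H : _ && _ = false |- _ => apply andb_false_iff in H as [?|?]
    | H : Nat.eqb _ _ = true |- _ => apply Nat.eqb_eq in H
    | H : Nat.eqb _ _ = false |- _ => apply Nat.eqb_neq in H
    end; try discriminate; lia.

Lemma Phi_rotation m ls A B C : length ls <= m ->
  (Z.abs (Phi m (spine ls (Node (Node A B) C))
          - Phi m (spine ls (Node A (Node B C)))) <= 1)%Z.
Proof.
  intros Hk. destruct C as [|c [|c' C]].
  - rewrite Phi_spine_last, Phi_spine by (simpl; lia).
    destruct B; potential_arith.
  - rewrite !Phi_spine by (simpl; lia).
    destruct c; potential_arith.
  - rewrite !Phi_spine by (simpl; lia).
    simpl last_left; simpl penult_left.
    destruct (last_left (Node c' C)); potential_arith.
Qed.

Lemma Phi_step m t u : rra_step m t u -> (Phi m t <= Phi m u + 1)%Z.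
Proof.
  intros (k & Hk & H).
  destruct (rarm_rotation_spine k t u H) as (ls & A & B & C & <- & [[-> ->]|[-> ->]]);
    pose proof (Phi_rotation m ls A B C Hk); lia.
Qed.

Lemma Phi_path m j t u : rra_path m j t u -> (Phi m t <= Phi m u + Z.of_nat j)%Z.
Proof.
  induction 1 as [|j t u v Hstep _ IH]; [lia|].
  pose proof (Phi_step m t u Hstep). lia.
Qed.

Lemma drra_ge_Phi m t1 t2 b : (Phi m t2 + Z.of_nat b <= Phi m t1)%Z -> drra_ge m t1 t2 b.
Proof. intros Hb j Hj. apply Phi_path in Hj. lia. Qed.

Lemma nodes_right_vine k : nodes (right_vine k) = k.
Proof. induction k; simpl; auto. Qed.

Lemma arm_right_vine k : arm (right_vine k) = k.
Proof. induction k; simpl; auto. Qed.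

Lemma is_right_vine_right_vine k : is_right_vine (right_vine k) = true.
Proof. induction k; simpl; auto. Qed.

Lemma vine_tail_right_vine k : vine_tail (right_vine k) = k.
Proof.
  induction k; simpl; auto.
  rewrite is_right_vine_right_vine, IHk. reflexivity.
Qed.

Lemma last_left_right_vine k : last_left (right_vine k) = Leaf.
Proof. induction k as [|[|k] IH]; simpl; auto. Qed.

Lemma Phi_hanging_vine m p : m + 1 < p ->
  Phi m (Node (right_vine p) Leaf) = (2 * (Z.of_nat p - Z.of_nat m) - 3)%Z.
Proof.
  intros Hp. destruct p as [|[|p]]; try lia.
  unfold Phi. cbn [arm last_left penult_left].
  rewrite potential_node by discriminate.
  rewrite last_left_right_vine, arm_right_vine.
  cbn [vine_tail is_right_vine Nat.eqb andb]. lia.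
Qed.

Lemma Phi_hanging_left_vine m p :
  Phi m (Node (Node (right_vine p) Leaf) Leaf) = (- 2 * Z.of_nat p - 3)%Z.
Proof.
  unfold Phi. cbn [arm last_left penult_left].
  rewrite potential_node by discriminate. cbn [arm last_left Nat.eqb andb].
  rewrite is_right_vine_right_vine, vine_tail_right_vine. lia.
Qed.

Lemma rra_path_app m j1 j2 t u v :
  rra_path m j1 t u -> rra_path m j2 u v -> rra_path m (j1 + j2) t v.
Proof.
  induction 1 as [|j t w u Hstep _ IH]; intros; [assumption|].
  apply rra_cons with w; auto.
Qed.

Lemma drra_defined_trans m t u v :
  drra_defined m t u -> drra_defined m u v -> drra_defined m t v.
Proof. intros [j1 H1] [j2 H2]. exists (j1 + j2). eapply rra_path_app; eauto. Qed.

Lemma drra_defined_root m t u : root_rotation t u -> drra_defined m t u.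
Proof.
  intros H. exists 1. apply rra_cons with u; [|constructor].
  exists 0. split; [lia|exact H].
Qed.

Lemma drra_defined_level1 m l t u : 1 <= m -> root_rotation t u ->
  drra_defined m (Node l t) (Node l u).
Proof.
  intros Hm H. exists 1. apply rra_cons with (Node l u); [|constructor].
  exists 1. split; [exact Hm|]. simpl. auto.
Qed.

Definition two_vines i k : tree := Node (left_vine i) (Node (right_vine k) Leaf).
Definition two_vines_capped i k : tree :=
  Node (left_vine i) (Node (right_vine k) (Node Leaf Leaf)).

Lemma two_vines_transfer m i k : 1 <= m ->
  drra_defined m (two_vines i k) (two_vines (i + k) 0).
Proof.
  intros Hm. revert i. induction k as [|k IH]; intros i.
  - rewrite Nat.add_0_r. exists 0. constructor.
  - apply drra_defined_trans with (two_vines (S i) k).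
    + eapply drra_defined_trans.
      * apply drra_defined_level1; [exact Hm|left; reflexivity].
      * apply drra_defined_root. right. reflexivity.
    + rewrite <- Nat.add_succ_comm. apply IH.
Qed.

Lemma two_vines_capped_transfer m i k : 1 <= m ->
  drra_defined m (two_vines_capped i k) (two_vines_capped 0 (i + k)).
Proof.
  intros Hm. revert k. induction i as [|i IH]; intros k.
  - exists 0. constructor.
  - apply drra_defined_trans with (two_vines_capped i (S k)).
    + eapply drra_defined_trans.
      * apply drra_defined_root. left. reflexivity.
      * apply drra_defined_level1; [exact Hm|right; reflexivity].
    + rewrite Nat.add_succ_comm. apply IH.
Qed.

Lemma hanging_vines_connected m p : 1 <= m ->
  drra_defined m (Node (right_vine (S (S p))) Leaf)
                 (Node (Node (right_vine (S p)) Leaf) Leaf).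
Proof.
  intros Hm.
  apply drra_defined_trans with (two_vines 0 (S p));
    [apply drra_defined_root; left; reflexivity|].
  eapply drra_defined_trans; [apply two_vines_transfer, Hm|].
  apply drra_defined_trans with (two_vines_capped p 0);
    [apply drra_defined_root; left; reflexivity|].
  eapply drra_defined_trans; [apply two_vines_capped_transfer, Hm|].
  rewrite Nat.add_0_r.
  apply drra_defined_trans with (Node (right_vine (S p)) (Node Leaf Leaf));
    apply drra_defined_root; right; reflexivity.
Qed.

Theorem theorem3p10 :
  forall m : nat, 1 <= m ->
  forall n : nat, m + 4 < n ->
  exists t1 t2 : tree,
    nodes t1 = n /\ nodes t2 = n /\
    drra_defined m t1 t2 /\
    drra_ge m t1 t2 (4 * n - 4 * m - 4).
Proof.
  intros m Hm n Hn.
  destruct n as [|[|[|p]]]; try lia.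
  exists (Node (right_vine (S (S p))) Leaf), (Node (Node (right_vine (S p)) Leaf) Leaf).
  split; [|split; [|split]].
  - simpl. rewrite nodes_right_vine. lia.
  - simpl. rewrite nodes_right_vine. lia.
  - apply hanging_vines_connected, Hm.
  - apply drra_ge_Phi.
    rewrite Phi_hanging_vine, Phi_hanging_left_vine by lia. lia.
Qed.
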